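(* Let $X=\mathbb{R}^n$ and let $f\colon X\to\mathbb{R}$ be Borel measurable and attain a minimum. Consider the population game $F$ with strategy set $X$ and mean payoff functions $F_\mu(x)=\langle f,\mu\rangle - f(x)$ for $\mu\in\mathcal{P}(X)$. Then a distribution $\mu\in\mathcal{P}(X)$ is a Nash equilibrium of $F$ if and only if $\mu$ is a global minimizer of $\inf_{\nu\in\mathcal{P}(X)}\langle f,\nu\rangle$. Furthermore, $\mu$ is a strict Nash equilibrium of $F$ if and only if $\mu$ is the unique global minimizer of $\inf_{\nu\in\mathcal{P}(X)}\langle f,\nu\rangle$.
   Context: $\mathcal{P}(X)$ denotes the set of Borel probability measures on $X$. For a measure $\mu$ and measurable $h$, $\langle h,\mu\rangle:=\int_X h\,d\mu$, which is allowed to be infinite (since $f$ is bounded below, $\langle f,\mu\rangle\in(-\infty,+\infty]$). A population game with strategy set $X$ assigns to each population state $\mu\in\mathcal{P}(X)$ a payoff function $F_\mu\colon X\to\mathbb{R}$. Equivalently, $F_\mu(x)=\int_X (f(x')-f(x))\,d\mu(x')$. A Nash equilibrium of $F$ is a $\mu\in\mathcal{P}(X)$ with $\langle F_\mu,\nu\rangle\le\langle F_\mu,\mu\rangle$ for all $\nu\in\mathcal{P}(X)$; it is a strict Nash equilibrium if the inequality is strict for all $\nu\neq\mu$. *)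

From HB Require Import structures.
From mathcomp Require Import all_boot all_order all_algebra.
From mathcomp Require Import all_classical all_reals all_analysis.
Set Implicit Arguments. Unset Strict Implicit. Unset Printing Implicit Defensive.
Import Order.TTheory GRing.Theory Num.Theory.
Import numFieldNormedType.Exports.
Local Open Scope classical_set_scope.
Local Open Scope ring_scope.
Local Open Scope ereal_scope.

(* X = R^n (1 x n row matrices 'M[R]_(1,n) = 'rV[R]_n) equipped with its Borel sigma-algebra
   (generated by the open sets of the product topology). *)
Definition Rn (R : realType) (n : nat) := g_sigma_algebraType (@open 'M[R]_(1, n)).

Section Game.
Context {R : realType} {n : nat}.
Local Notation X := (Rn R n).

Definition pairing (h : X -> R) (mu : probability X R) : \bar R :=
  \int[mu]_x (h x)%:E.

Definition same_measure (mu nu : probability X R) : Prop :=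
  forall A, measurable A -> mu A = nu A.

(* mean payoff F_mu(x) = <f,mu> - f(x) (real valued; only meaningful when <f,mu> < +oo) *)
Definition payoff (f : X -> R) (mu : probability X R) (x : X) : R :=
  (fine (pairing f mu) - f x)%R.

(* Nash equilibrium: F_mu is a genuine real payoff (i.e. <f,mu> finite) and
   <F_mu, nu> <= <F_mu, mu> for all nu *)
Definition nash (f : X -> R) (mu : probability X R) : Prop :=
  pairing f mu < +oo /\
  forall nu : probability X R, pairing (payoff f mu) nu <= pairing (payoff f mu) mu.

Definition strict_nash (f : X -> R) (mu : probability X R) : Prop :=
  pairing f mu < +oo /\
  forall nu : probability X R, ~ same_measure nu mu ->
    pairing (payoff f mu) nu < pairing (payoff f mu) mu.

Definition minimizer (f : X -> R) (mu : probability X R) : Prop :=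
  forall nu : probability X R, pairing f mu <= pairing f nu.

Definition unique_minimizer (f : X -> R) (mu : probability X R) : Prop :=
  minimizer f mu /\ forall nu : probability X R, minimizer f nu -> same_measure nu mu.
End Game.

From HB Require Import structures.
From mathcomp Require Import all_boot all_order all_algebra.
From mathcomp Require Import all_classical all_reals all_analysis.
From mathcomp Require Import measurable_realfun.
Set Implicit Arguments. Unset Strict Implicit. Unset Printing Implicit Defensive.
Import Order.TTheory GRing.Theory Num.Theory.
Import numFieldNormedType.Exports.
Local Open Scope classical_set_scope.
Local Open Scope ring_scope.

(* Since f is bounded below, <f, nu> lies in (-oo, +oo] for every nu, and as
   soon as <f, mu> is finite, <F_mu, nu> = <f, mu> - <f, nu> holds in the
   extended reals, also when <f, nu> = +oo.  Hence <F_mu, nu> <= <F_mu, mu> = 0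
   says exactly <f, mu> <= <f, nu>, and its strict form for nu <> mu says that
   mu is the unique minimizer.  A minimizer has a finite value because it does
   at least as well as a Dirac mass. *)

Section bounded_below_integral.
Local Open Scope ereal_scope.
Context d (T : measurableType d) (R : realType) (P : probability T R).

Lemma bounded_below_integral_funeneg_fin_num (u : T -> R) (a : R) :
  measurable_fun setT u -> (forall x, a <= u x)%R ->
  \int[P]_x (EFin \o u)^\- x \is a fin_num.
Proof.
move=> mu ua; apply: integrable_fin_num => //.
apply: (@le_integrable _ _ _ P setT measurableT _ (EFin \o cst `|a|%R)).
- exact/measurable_funeneg/measurable_EFinP.
- move=> x _; rewrite gee0_abs ?funeneg_ge0 // funenegE /= ge_max !lee_fin.
  rewrite normr_id normr_ge0 andbT.
  by rewrite lerNl (le_trans (lerNnormlW (lexx _)) (ua x)).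
- exact: (finite_measure_integrable_cst P).
Qed.

Lemma bounded_below_integral_pinfty (u : T -> R) (a : R) :
  measurable_fun setT u -> (forall x, a <= u x)%R ->
  ~ P.-integrable setT (EFin \o u) -> \int[P]_x (u x)%:E = +oo.
Proof.
move=> mu ua nint; have mEu : measurable_fun setT (EFin \o u).
  exact/measurable_EFinP.
have neg_fin := bounded_below_integral_funeneg_fin_num mu ua.
have pos_infty : \int[P]_x (EFin \o u)^\+ x = +oo.
  apply/eqP; rewrite eq_le leey /= leNgt; apply/negP => pos_lty.
  apply: nint; apply/integrableP; split => //.
  rewrite -[fun x => _]/(abse \o (EFin \o u)) fune_abse ge0_integralD //.
  - by rewrite lte_add_pinfty // ltey_eq neg_fin.
  - exact: measurable_funepos.
  - exact: measurable_funeneg.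
move: neg_fin; rewrite -fin_numN => /fin_numP[neg_neq_ninfty _].
by rewrite integralE pos_infty addye.
Qed.

Lemma bounded_below_integral_fin_num (u : T -> R) (a : R) :
  measurable_fun setT u -> (forall x, a <= u x)%R ->
  \int[P]_x (u x)%:E < +oo -> \int[P]_x (u x)%:E \is a fin_num.
Proof.
move=> mu ua; have [iu _|niu] := pselect (P.-integrable setT (EFin \o u)).
  exact: integrable_fin_num.
by rewrite (bounded_below_integral_pinfty mu ua niu) ltxx.
Qed.

Lemma bounded_below_integralDr (u : T -> R) (a c : R) :
  measurable_fun setT u -> (forall x, a <= u x)%R ->
  \int[P]_x (u x + c)%:E = \int[P]_x (u x)%:E + c%:E.
Proof.
move=> mu ua; have ic := finite_measure_integrable_cst P c measurableT.
have [iu|niu] := pselect (P.-integrable setT (EFin \o u)).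
  under eq_integral do rewrite EFinD.
  rewrite integralD //.
  have P1 : (P : {measure set T -> \bar R}) setT = 1 := probability_setT P.
  by rewrite integral_cst // P1 mule1.
have muc : measurable_fun setT (fun x => u x + c)%R by exact: measurable_funD.
have uc_ge x : (a + c <= u x + c)%R by rewrite lerD2r.
have niuc : ~ P.-integrable setT (EFin \o (fun x => u x + c)%R).
  move=> iuc; apply: niu.
  have -> : EFin \o u = (EFin \o (fun x => u x + c)%R) \- (EFin \o cst c).
    by apply/funext => x /=; rewrite -EFinB addrK.
  exact: integrableB.
rewrite (bounded_below_integral_pinfty muc uc_ge niuc).
by rewrite (bounded_below_integral_pinfty mu ua niu) addye.
Qed.

Lemma bounded_below_integral_cstB (u : T -> R) (a c : R) :
  measurable_fun setT u -> (forall x, a <= u x)%R ->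
  \int[P]_x (c - u x)%:E = c%:E - \int[P]_x (u x)%:E.
Proof.
move=> mu ua.
have muc : measurable_fun setT (fun x => u x - c)%R by exact: measurable_funB.
have uc_ge x : (a - c <= u x - c)%R by rewrite lerD2r.
have neg_fin := bounded_below_integral_funeneg_fin_num muc uc_ge.
transitivity (\int[P]_x - (u x - c)%:E).
  by apply: eq_integral => x _; rewrite -EFinN opprB.
rewrite integralN; last by apply: fin_num_adde_defl; rewrite fin_numN.
rewrite (bounded_below_integralDr _ mu ua).
by rewrite addeC oppeD // EFinN oppeK.
Qed.

End bounded_below_integral.

Section nash_minimizer.
Local Open Scope ereal_scope.
Context (R : realType) (n : nat) (f : Rn R n -> R).
Hypothesis mf : measurable_fun setT f.
Variable x0 : Rn R n.
Hypothesis f_ge : forall x, (f x0 <= f x)%R.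

Lemma pairing_fin_num (mu : probability (Rn R n) R) :
  pairing f mu < +oo -> pairing f mu \is a fin_num.
Proof. exact: bounded_below_integral_fin_num mf f_ge. Qed.

Lemma pairing_payoff (mu nu : probability (Rn R n) R) :
  pairing f mu \is a fin_num ->
  pairing (payoff f mu) nu = pairing f mu - pairing f nu.
Proof.
by move=> fmu; rewrite /pairing (bounded_below_integral_cstB _ _ mf f_ge) fineK.
Qed.

Lemma payoff_le (mu nu : probability (Rn R n) R) :
  pairing f mu \is a fin_num ->
  (pairing (payoff f mu) nu <= pairing (payoff f mu) mu) =
  (pairing f mu <= pairing f nu).
Proof. by move=> fmu; rewrite !pairing_payoff // subee // sube_le0. Qed.

Lemma payoff_lt (mu nu : probability (Rn R n) R) :
  pairing f mu \is a fin_num ->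
  (pairing (payoff f mu) nu < pairing (payoff f mu) mu) =
  (pairing f mu < pairing f nu).
Proof. by move=> fmu; rewrite !pairing_payoff // subee // sube_lt0 ?fmu. Qed.

Lemma minimizer_pairing_lty (mu : probability (Rn R n) R) :
  minimizer f mu -> pairing f mu < +oo.
Proof.
move=> /(_ (\d_x0 : probability _ R)); move/le_lt_trans; apply.
rewrite /pairing integral_dirac //; last exact/measurable_EFinP.
by rewrite diracT mul1e ltry.
Qed.

Lemma pairing_same_measure (mu nu : probability (Rn R n) R) :
  same_measure nu mu -> pairing f nu = pairing f mu.
Proof. by move=> numu; apply: eq_measure_integral => A mA _; exact: numu. Qed.

Lemma nash_minimizer (mu : probability (Rn R n) R) :
  nash f mu <-> minimizer f mu.
Proof.
split=> [[/pairing_fin_num fmu nash_mu] nu | min_mu].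
  by rewrite -payoff_le // nash_mu.
have fmu := pairing_fin_num (minimizer_pairing_lty min_mu).
by split=> [|nu]; [exact: minimizer_pairing_lty | rewrite payoff_le].
Qed.

Lemma strict_nash_unique_minimizer (mu : probability (Rn R n) R) :
  strict_nash f mu <-> unique_minimizer f mu.
Proof.
split=> [[/pairing_fin_num fmu snash_mu] | [min_mu uniq_mu]].
  have lt_mu nu : ~ same_measure nu mu -> pairing f mu < pairing f nu.
    by move=> numu; rewrite -payoff_lt // snash_mu.
  split=> [nu | nu min_nu].
    have [/pairing_same_measure -> //|numu] := pselect (same_measure nu mu).
    exact/ltW/lt_mu.
  apply: contrapT => numu.
  by have := min_nu mu; rewrite leNgt lt_mu.
have fmu := pairing_fin_num (minimizer_pairing_lty min_mu).
split=> [|nu numu]; first exact: minimizer_pairing_lty.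
rewrite payoff_lt // ltNge; apply/negP => nu_le; apply/numu/uniq_mu => rho.
exact: le_trans nu_le (min_mu rho).
Qed.

End nash_minimizer.

Theorem proposition1 (R : realType) (n : nat) (f : Rn R n -> R)
    (hf : measurable_fun setT f)
    (hmin : exists x0 : Rn R n, forall x : Rn R n, f x0 <= f x)
    (mu : probability (Rn R n) R) :
  (nash f mu <-> minimizer f mu) /\
  (strict_nash f mu <-> unique_minimizer f mu).
Proof.
have [x0 f_ge] := hmin.
exact: conj (nash_minimizer hf f_ge mu)
  (strict_nash_unique_minimizer hf f_ge mu).
Qed.
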